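(* Let $\theta_0:\mathbb{R}^d\to\mathbb{R}^{d_\theta}$ be measurable and for each $N\ge1$ let $\hat\theta_N$ be a (possibly random) $\mathbb{R}^{d_\theta}$-valued estimator built from data independent of $X^s,X^t$. Suppose (i) $\|\hat\theta_N(X^s)\|_\infty\le\xi_N$ a.s. for every $N\ge1$; (ii) $\mathbb{E}\|\theta_0(X^s)\|_\infty^8<\infty$; (iii) there are constants $c>0$, $m\ge0$ with $r_0(x)\le c(\|x\|_\infty^m+1)$ for all $x$; (iv) $\mathbb{E}[r_0(X^s)^2]<\infty$; (v) $\mathbb{E}\exp(\varsigma\|X^s\|_\infty)<\infty$ for some constant $\varsigma>0$. Then for $N\ge2$, $$\mathbb{E}\|\hat\theta_N(X^t)-\theta_0(X^t)\|_2^2=\mathbb{E}\big[\|\hat\theta_N(X^s)-\theta_0(X^s)\|_2^2r_0(X^s)\big]\le c_1(\log N)^m\,\mathbb{E}\|\hat\theta_N(X^s)-\theta_0(X^s)\|_2^2+\frac{c_2d_\theta(\xi_N^2+1)}{N},$$ with constants $c_1,c_2$ not depending on $N$.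
   Context: $X^s,X^t$ are random vectors in $\mathbb{R}^d$ with Lebesgue densities $p,q$, $\{q>0\}\subset\{p>0\}$, and density ratio $r_0=q/p$ (with $0/0=0$). Expectations are over both the test point and the randomness of $\hat\theta_N$. *)

From HB Require Import structures.
From mathcomp Require Import all_boot all_order all_algebra.
From mathcomp Require Import all_classical all_reals all_analysis.
Set Implicit Arguments. Unset Strict Implicit. Unset Printing Implicit Defensive.
Import Order.TTheory GRing.Theory Num.Theory.
Local Open Scope ring_scope.
Local Open Scope classical_set_scope.

(* R^n is modelled as n.-tuple R with its product (Borel) sigma-algebra. *)

Definition norminf (R : realType) (n : nat) (x : n.-tuple R) : R :=
  \big[Num.max/0]_(i < n) `|tnth x i|.

Definition norm2sq (R : realType) (n : nat) (x : n.-tuple R) : R :=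
  \sum_(i < n) (tnth x i) ^+ 2.

Definition tsub (R : realType) (n : nat) (x y : n.-tuple R) : n.-tuple R :=
  [tuple tnth x i - tnth y i | i < n].

(* lam is (the) Lebesgue measure on R^n: it gives every half-open box its
   volume (this characterises Lebesgue measure on the Borel sets). *)
Definition is_lebesgue_rV (R : realType) (n : nat)
  (lam : {measure set (n.-tuple R) -> \bar R}) : Prop :=
  forall a b : n.-tuple R, (forall i, tnth a i <= tnth b i) ->
    lam [set x | forall i, tnth a i < tnth x i <= tnth b i] =
    (\prod_(i < n) (tnth b i - tnth a i))%:E.

Definition is_density (R : realType) (n : nat)
  (lam : {measure set (n.-tuple R) -> \bar R}) (p : n.-tuple R -> R) : Prop :=
  measurable_fun setT p /\ (forall x, 0 <= p x) /\
  (\int[lam]_x (p x)%:E = 1)%E.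

(* density ratio r0 = q/p, with 0/0 = 0 (in MathComp, 0^-1 = 0) *)
Definition dratio (R : realType) (n : nat) (p q : n.-tuple R -> R)
  (x : n.-tuple R) : R := q x / p x.

(* Expectation of f(omega, X) where omega ~ P (the randomness of the
   estimator) is independent of X, and X has Lebesgue density p. *)
Definition Ejoint (R : realType) (d0 : measure_display) (Omega : measurableType d0)
  (P : probability Omega R) (n : nat)
  (lam : {measure set (n.-tuple R) -> \bar R}) (p : n.-tuple R -> R)
  (f : Omega -> n.-tuple R -> R) : \bar R :=
  (\int[P]_w \int[lam]_x (f w x * p x)%:E)%E.

Definition Edens (R : realType) (n : nat)
  (lam : {measure set (n.-tuple R) -> \bar R}) (p : n.-tuple R -> R)
  (g : n.-tuple R -> R) : \bar R :=
  (\int[lam]_x (g x * p x)%:E)%E.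

Set Warnings "-notation-overridden,-ambiguous-paths,-notation-incompatible-prefix,-redundant-canonical-projection".
From HB Require Import structures.
From mathcomp Require Import all_boot all_order all_algebra.
From mathcomp Require Import all_classical all_reals all_analysis.
From mathcomp Require Import measurable_realfun.
From mathcomp Require Import ring lra.
Import Order.TTheory GRing.Theory Num.Theory.
Local Open Scope ring_scope.
Local Open Scope classical_set_scope.
Set Implicit Arguments. Unset Strict Implicit.

(* On the event [|thetahat|_oo <= xi_N] one has, pointwise,
     err * r0 <= A_N * err + B_N * G,
   with A_N = O((log N)^m), B_N = 2 dtheta (xi_N^2 + 1) / N and the
   [p]-integrable envelope G = r0^2 + 1 + e^(vs |x|_oo) + |theta0|_oo^8.
   Where e^(vs |x|_oo / 4) <= N, |x|_oo <= (4/vs) log N and (iii) gives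
   r0 <= A_N; elsewhere N < y := e^(vs |x|_oo / 4), and AM-GM bounds r0 and
   |theta0|^2 r0 by (r0^2 + 1 + y^4 + |theta0|^8) / N.  Integrating against
   p, then over the estimator's randomness, gives the bound; the equality
   is just q = r0 p. *)

Lemma measurable_inv (R : realType) : measurable_fun [set: R] (@GRing.inv R).
Proof.
have -> : [set: R] = [set x | x != 0] `|` [set 0].
  by apply/seteqP; split=> x //= _; case: (eqVneq x 0); [right|left].
apply/measurable_funU => //; first by apply: open_measurable; exact: open_neq.
split; last exact: measurable_fun_set1.
apply: open_continuous_measurable_fun; first exact: open_neq.
by move=> x; rewrite inE /= => x0; exact: inv_continuous.
Qed.

Section measurable_tuple_functions.
Variables (R : realType) (d : measure_display) (T : measurableType d).

Lemma measurable_fun_bigmax0 n (g : 'I_n -> T -> R) :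
  (forall i, measurable_fun setT (g i)) ->
  measurable_fun setT (fun t => \big[Num.max/0]_(i < n) g i t).
Proof.
elim: n g => [|n IH] g mg.
  by under eq_fun do rewrite big_ord0; exact: measurable_cst.
under eq_fun do rewrite big_ord_recl.
apply: (@measurable_maxr _ _ _ setT (g ord0)); first exact: mg.
exact: (IH (fun i => g (lift ord0 i))).
Qed.

Lemma measurable_fun_tnth n (f : T -> n.-tuple R) (i : 'I_n) :
  measurable_fun setT f -> measurable_fun setT (fun t => tnth (f t) i).
Proof. exact: (measurableT_comp (measurable_tnth i)). Qed.

Lemma measurable_norminf n (f : T -> n.-tuple R) :
  measurable_fun setT f -> measurable_fun setT (fun t => norminf (f t)).
Proof.
move=> mf; apply: measurable_fun_bigmax0 => i.
exact/(measurableT_comp (@normr_measurable _ _))/measurable_fun_tnth.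
Qed.

Lemma measurable_norm2sq_tsub n (f g : T -> n.-tuple R) :
  measurable_fun setT f -> measurable_fun setT g ->
  measurable_fun setT (fun t => norm2sq (tsub (f t) (g t))).
Proof.
move=> mf mg; rewrite /norm2sq.
under eq_fun do under eq_bigr do rewrite tnth_mktuple.
apply: measurable_sum => i; apply/measurable_funX/measurable_funB;
  exact: measurable_fun_tnth.
Qed.

Lemma measurable_norminf_gt_indicator n (f : T -> n.-tuple R) (xi : R) :
  measurable_fun setT f ->
  measurable_fun setT (fun t => if xi < norminf (f t) then 1 else 0 : R).
Proof.
move=> mf; apply: measurable_fun_ifT; [|exact: measurable_cst|exact: measurable_cst].
exact: measurable_fun_ltr (measurable_cst _) (measurable_norminf mf).
Qed.

End measurable_tuple_functions.

Lemma norminf_ge0 (R : realType) n (x : n.-tuple R) : 0 <= norminf x.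
Proof.
by apply: (big_ind (fun y => 0 <= y)) => // a b a0 b0; rewrite le_max a0.
Qed.

Lemma le_bigmax0_seq (R : realDomainType) (I : eqType) (s : seq I) (F : I -> R) i :
  i \in s -> F i <= \big[Num.max/0]_(j <- s) F j.
Proof.
elim: s => [//|a s IH]; rewrite inE big_cons le_max => /orP[/eqP<-|/IH->].
  by rewrite lexx.
by rewrite orbT.
Qed.

Lemma tnth_le_norminf (R : realType) n (x : n.-tuple R) i :
  `|tnth x i| <= norminf x.
Proof. exact: le_bigmax0_seq (mem_index_enum i). Qed.

Lemma norm2sq_ge0 (R : realType) n (x : n.-tuple R) : 0 <= norm2sq x.
Proof. by apply: sumr_ge0 => i _; exact: sqr_ge0. Qed.

Lemma measurable_box (R : realType) n (P : 'I_n -> set (n.-tuple R)) :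
  (forall i, measurable (P i)) -> measurable [set x | forall i, P i x].
Proof.
move=> mP; suff mPs (s : seq 'I_n) : measurable [set x | forall i, i \in s -> P i x].
  rewrite (_ : [set x | _] = [set x | forall i, i \in enum 'I_n -> P i x]) //.
  by apply/seteqP; split => x /= h i => [_|]; apply: h; rewrite ?mem_enum.
elim: s => [|a s IH].
  by rewrite (_ : [set x | _] = setT)//; apply/seteqP; split => x.
rewrite (_ : [set x | _] = P a `&` [set x | forall i, i \in s -> P i x]).
  exact: measurableI.
apply/seteqP; split => x /= => [h|[Pa h] i]; last first.
  by rewrite inE => /orP[/eqP->//|]; exact: h.
by split=> [|i si]; apply: h; rewrite inE ?eqxx ?si ?orbT.
Qed.

Lemma is_lebesgue_rV_sigma_finite (R : realType) n
    (lam : {measure set (n.-tuple R) -> \bar R}) :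
  is_lebesgue_rV lam -> sigma_finite setT lam.
Proof.
move=> Hlam; pose a k : n.-tuple R := [tuple - k%:R | _ < n].
pose b k : n.-tuple R := [tuple k%:R | _ < n].
exists (fun k => [set x | forall i, tnth (a k) i < tnth x i <= tnth (b k) i]).
  apply/seteqP; split => x // _; exists (Num.truncn (norminf x)).+1 => //= i.
  have := le_lt_trans (tnth_le_norminf x i) (truncnS_gt (norminf x)).
  by rewrite !tnth_mktuple ltr_norml => /andP[-> /ltW ->].
move=> k; split.
  apply: measurable_box => i.
  rewrite (_ : (fun x => _) =
      (fun x => tnth x i) @^-1` `]tnth (a k) i, tnth (b k) i]%classic).
    by rewrite -[X in measurable X]setTI; exact: measurable_tnth.
  by apply/seteqP; split => x /=; rewrite in_itv.
rewrite Hlam ?ltry// => i.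
by rewrite !tnth_mktuple (le_trans (_ : _ <= 0)) ?oppr_le0 ?ler0n.
Qed.

(* [lam] itself is only a measure; this alias carries the sigma-finite
   structure needed for Fubini-Tonelli. *)
Definition sigma_finite_lebesgue (R : realType) n
  (lam : {measure set (n.-tuple R) -> \bar R}) (H : is_lebesgue_rV lam) :
  set (n.-tuple R) -> \bar R := lam.

HB.instance Definition _ (R : realType) n (lam : {measure set (n.-tuple R) -> \bar R})
  (H : is_lebesgue_rV lam) := Measure.copy (sigma_finite_lebesgue H) lam.

HB.instance Definition _ (R : realType) n (lam : {measure set (n.-tuple R) -> \bar R})
  (H : is_lebesgue_rV lam) := @Measure_isSigmaFinite.Build _ _ _
    (sigma_finite_lebesgue H) (is_lebesgue_rV_sigma_finite H).

Lemma measurable_partial_integral (R : realType) n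
    (lam : {measure set (n.-tuple R) -> \bar R}) (H : is_lebesgue_rV lam)
    d0 (Omega : measurableType d0) (f : Omega * n.-tuple R -> R) :
  measurable_fun setT f -> (forall z, 0 <= f z) ->
  measurable_fun setT (fun w => (\int[lam]_x (f (w, x))%:E)%E).
Proof.
move=> mf f0; apply: (@measurable_fun_fubini_tonelli_F _ _ Omega _ R
  (sigma_finite_lebesgue H) (EFin \o f)) => [|z]; last by rewrite lee_fin.
exact/measurable_EFinP.
Qed.

Section integral_bounds.
Local Open Scope ereal_scope.
Variables (d : measure_display) (T : measurableType d) (R : realType).
Variable mu : {measure set T -> \bar R}.

Lemma ae_eq0_of_integral_eq0 (f : T -> \bar R) :
  measurable_fun setT f -> (forall x, 0 <= f x) -> \int[mu]_x f x = 0 ->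
  {ae mu, forall x, setT x -> f x = 0}.
Proof.
move=> mf f0 h; apply/(ae_eq_integral_abs mu measurableT mf).
by rewrite -h; apply: eq_integral => x _; rewrite gee0_abs.
Qed.

Lemma ae_ge0_le_integral_affine (f g k : T -> \bar R) (A B : R) :
  (0 <= A)%R -> (0 <= B)%R ->
  measurable_fun setT f -> measurable_fun setT g -> measurable_fun setT k ->
  (forall x, 0 <= f x) -> (forall x, 0 <= g x) -> (forall x, 0 <= k x) ->
  {ae mu, forall x, setT x -> f x <= A%:E * g x + B%:E * k x} ->
  \int[mu]_x f x <= A%:E * \int[mu]_x g x + B%:E * \int[mu]_x k x.
Proof.
move=> A0 B0 mf mg mk f0 g0 k0 fle.
have Ag0 x : 0 <= A%:E * g x by rewrite mule_ge0.
have Bk0 x : 0 <= B%:E * k x by rewrite mule_ge0.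
rewrite -!ge0_integralZl// -ge0_integralD//; last 2 first.
- exact: measurable_funeM.
- exact: measurable_funeM.
apply: ae_ge0_le_integral => //; first by move=> x _; rewrite adde_ge0.
by apply: emeasurable_funD; exact: measurable_funeM.
Qed.

Lemma ge0_integralD_lty (f g : T -> R) :
  measurable_fun setT f -> measurable_fun setT g ->
  (forall x, 0 <= f x)%R -> (forall x, 0 <= g x)%R ->
  \int[mu]_x (f x)%:E < +oo -> \int[mu]_x (g x)%:E < +oo ->
  \int[mu]_x (f x + g x)%:E < +oo.
Proof.
move=> mf mg f0 g0 fi gi; under eq_integral do rewrite EFinD.
rewrite ge0_integralD//; first exact: lte_add_pinfty.
- by move=> x _; rewrite lee_fin.
- exact/measurable_EFinP.
- by move=> x _; rewrite lee_fin.
- exact/measurable_EFinP.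
Qed.

End integral_bounds.

(* Where [expR (vs * nx / 4) <= N] we have [nx <= (4 / vs) * ln N], and
   [ln N >= ln 2] absorbs the additive constant. *)
Lemma le_lnpow_of_expR_le (R : realType) (nx r c m vs N : R) :
  0 < c -> 0 <= m -> 0 < vs -> 2 <= N -> 0 <= nx ->
  r <= c * (nx `^ m + 1) -> expR (vs * nx / 4) <= N ->
  r <= c * ((4 / vs) `^ m + (ln 2 `^ m)^-1) * ln N `^ m.
Proof.
move=> c0 m0 vs0 N2 nx0 hr he.
have N0 : 0 < N by apply: lt_le_trans N2.
have ln20 : 0 < ln (2 : R) by apply: ln_gt0; lra.
have lnN : ln (2 : R) <= ln N by rewrite ler_ln// posrE; lra.
have nx_le : nx <= 4 / vs * ln N.
  have : vs * nx / 4 <= ln N by rewrite -ler_expR lnK// posrE.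
  have -> : 4 / vs * ln N = ln N * 4 / vs by field; rewrite gt_eqF.
  by rewrite ler_pdivlMr//; lra.
have hpow : nx `^ m <= (4 / vs) `^ m * ln N `^ m.
  have l0 : 0 <= ln N := le_trans (ltW ln20) lnN.
  rewrite -powRM ?divr_ge0 ?(ltW vs0)//; apply: ge0_ler_powR => //.
  by rewrite nnegrE; apply: mulr_ge0; [rewrite divr_ge0 ?ltW|].
have hone : 1 <= (ln 2 `^ m)^-1 * ln N `^ m.
  rewrite mulrC ler_pdivlMr ?powR_gt0// mul1r.
  by apply: ge0_ler_powR => //; rewrite nnegrE ltW// (lt_le_trans ln20).
apply: (le_trans hr); rewrite -mulrA ler_pM2l// mulrDl.
exact: lerD.
Qed.

(* AM-GM: when [N < y], both [r] and [a * r] are at most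
   [(r^2 + 1 + y^4 + a^4) / N]. *)
Lemma mul_le_div_quartic_sum (R : realType) (e r a y N D xi2 : R) :
  0 <= r -> 0 <= a -> 0 <= D -> 0 <= xi2 -> 0 < N -> N < y ->
  e <= D * (xi2 + a) ->
  e * r <= D * (xi2 + 1) / N * (r ^+ 2 + 1 + y ^+ 4 + a ^+ 4).
Proof.
move=> r0 a0 D0 x0 N0 Ny he.
set S := r ^+ 2 + 1 + y ^+ 4 + a ^+ 4.
have y0 : 0 <= y by apply: ltW; exact: lt_trans Ny.
have r_le : r <= S / N.
  rewrite ler_pdivlMr//.
  have : r * N <= r * y by rewrite ler_wpM2l// ltW.
  have := sqr_ge0 (r - y); have := sqr_ge0 (y ^+ 2 - 1).
  rewrite /S; nra.
have ar_le : a * r <= S / N.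
  rewrite ler_pdivlMr//.
  have : a * r * N <= a * r * y by rewrite ler_wpM2l ?mulr_ge0// ltW.
  have := sqr_ge0 (a ^+ 2 - y ^+ 2); have := sqr_ge0 (r - a * y).
  have := mulr_ge0 a0 y0.
  rewrite /S; nra.
have -> : D * (xi2 + 1) / N * S = D * (xi2 * (S / N) + S / N).
  by field; rewrite gt_eqF.
apply: (le_trans (ler_wpM2r r0 he)).
rewrite -mulrA ler_wpM2l// mulrDl.
by apply: lerD => //; exact: ler_wpM2l.
Qed.

Lemma norm2sq_tsub_le (R : realType) n (t th : n.-tuple R) xi :
  norminf t <= xi ->
  norm2sq (tsub t th) <= 2 * n%:R * (xi ^+ 2 + norminf th ^+ 2).
Proof.
move=> ht; apply: (@le_trans _ _ (\sum_(i < n) 2 * (xi ^+ 2 + norminf th ^+ 2))).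
  apply: ler_sum => i _; rewrite /tsub tnth_mktuple.
  have := le_trans (tnth_le_norminf t i) ht; rewrite ler_norml => /andP[h1 h2].
  have := tnth_le_norminf th i; rewrite ler_norml => /andP[h3 h4].
  set a := tnth t i in h1 h2 *; set b := tnth th i in h3 h4 *.
  have z1 : 0 <= (xi - a) * (a + xi) by apply: mulr_ge0; lra.
  have z2 : 0 <= (norminf th - b) * (b + norminf th) by apply: mulr_ge0; lra.
  have z3 := sqr_ge0 (a + b).
  nra.
by rewrite sumr_const card_ord -mulr_natl; lra.
Qed.

Lemma err_mul_dratio_le (R : realType) d dt (t th : dt.-tuple R) (x : d.-tuple R)
    (r c m vs N xi : R) :
  0 < c -> 0 <= m -> 0 < vs -> 2 <= N -> 0 <= r ->
  r <= c * (norminf x `^ m + 1) -> norminf t <= xi ->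
  norm2sq (tsub t th) * r <=
    c * ((4 / vs) `^ m + (ln 2 `^ m)^-1) * ln N `^ m * norm2sq (tsub t th)
  + 2 * dt%:R * (xi ^+ 2 + 1) / N *
      (r ^+ 2 + 1 + expR (vs * norminf x) + norminf th ^+ 8).
Proof.
move=> c0 m0 vs0 N2 r0 hr ht.
have e0 := norm2sq_ge0 (tsub t th).
have N0 : 0 < N by apply: lt_le_trans N2.
case: (leP (expR (vs * norminf x / 4)) N) => hN.
  rewrite -[X in X <= _]addr0 [X in X + 0]mulrC; apply: lerD.
    have := le_lnpow_of_expR_le c0 m0 vs0 N2 (norminf_ge0 x) hr hN.
    exact: ler_wpM2r.
  apply: mulr_ge0.
    by apply: divr_ge0; rewrite ?mulr_ge0 ?addr_ge0 ?sqr_ge0 ?ler0n ?ltW.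
  by rewrite !addr_ge0 ?sqr_ge0 ?expR_ge0 ?exprn_ge0 ?norminf_ge0.
rewrite -[X in X <= _]add0r; apply: lerD.
  by rewrite !mulr_ge0 ?(ltW c0) ?addr_ge0 ?invr_ge0 ?powR_ge0.
have -> : expR (vs * norminf x) = expR (vs * norminf x / 4) ^+ 4.
  by rewrite -expRM_natr -mulrA mulVf ?mulr1.
rewrite -[8%N]/(2 * 4)%N exprM.
apply: mul_le_div_quartic_sum => //; rewrite ?sqr_ge0 ?mulr_ge0 ?ler0n//.
exact: norm2sq_tsub_le.
Qed.

Section integral_le_off_event.
Local Open Scope ereal_scope.
Variables (d : measure_display) (T : measurableType d) (R : realType).
Variable mu : {measure set T -> \bar R}.
Variables (p G f g bad : T -> R) (A B : R).
Hypotheses (A0 : (0 <= A)%R) (B0 : (0 <= B)%R).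
Hypotheses (mp : measurable_fun setT p) (mG : measurable_fun setT G)
  (mf : measurable_fun setT f) (mg : measurable_fun setT g)
  (mbad : measurable_fun setT bad).
Hypotheses (p0 : forall x, (0 <= p x)%R) (G0 : forall x, (0 <= G x)%R)
  (f0 : forall x, (0 <= f x)%R) (g0 : forall x, (0 <= g x)%R)
  (bad0 : forall x, (0 <= bad x)%R).

Lemma integral_le_affine_off_null_event :
  \int[mu]_x (bad x * p x)%:E = 0 ->
  (forall x, bad x = 0 -> f x <= A * g x + B * G x)%R ->
  \int[mu]_x (f x * p x)%:E <=
    A%:E * \int[mu]_x (g x * p x)%:E + B%:E * \int[mu]_x (G x * p x)%:E.
Proof.
move=> null fle; have mEFin (h : T -> R) : measurable_fun setT h ->
    measurable_fun setT (fun x => (h x * p x)%:E).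
  by move=> mh; exact/measurable_EFinP/measurable_funM.
apply: ae_ge0_le_integral_affine => //; try exact: mEFin;
  try by move=> x; rewrite lee_fin mulr_ge0.
apply: filterS (ae_eq0_of_integral_eq0 (mEFin _ mbad) _ null); last first.
  by move=> x; rewrite lee_fin mulr_ge0.
move=> x /(_ I) [] /eqP; rewrite mulf_eq0 => /orP[/eqP/fle fx|/eqP->] _.
  by rewrite -!EFinM -EFinD lee_fin mulrA mulrA -mulrDl ler_wpM2r.
by rewrite !mulr0 mule0 adde_ge0 ?mule_ge0 ?lee_fin ?mulr_ge0.
Qed.

End integral_le_off_event.

Section Ejoint_le_off_event.
Local Open Scope ereal_scope.
Variables (R : realType) (n : nat) (lam : {measure set (n.-tuple R) -> \bar R}).
Hypothesis Hlam : is_lebesgue_rV lam.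
Variables (d0 : measure_display) (Omega : measurableType d0).
Variable P : probability Omega R.
Variables (p G : n.-tuple R -> R) (f g bad : Omega -> n.-tuple R -> R).
Variables (A B EG : R).
Hypotheses (A0 : (0 <= A)%R) (B0 : (0 <= B)%R).
Hypotheses (mp : measurable_fun setT p) (mG : measurable_fun setT G).
Hypotheses (mf : measurable_fun setT (fun z : Omega * n.-tuple R => f z.1 z.2))
  (mg : measurable_fun setT (fun z : Omega * n.-tuple R => g z.1 z.2))
  (mbad : measurable_fun setT (fun z : Omega * n.-tuple R => bad z.1 z.2)).
Hypotheses (p0 : forall x, (0 <= p x)%R) (G0 : forall x, (0 <= G x)%R)
  (f0 : forall w x, (0 <= f w x)%R) (g0 : forall w x, (0 <= g w x)%R)
  (bad0 : forall w x, (0 <= bad w x)%R).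

Let mEjoint (h : Omega -> n.-tuple R -> R) :
  measurable_fun setT (fun z : Omega * n.-tuple R => h z.1 z.2) ->
  (forall w x, (0 <= h w x)%R) ->
  measurable_fun setT (fun w => \int[lam]_x (h w x * p x)%:E).
Proof.
move=> mh h0; apply: (measurable_partial_integral Hlam
  (f := fun z => (h z.1 z.2 * p z.2)%R)) => [|z]; last by rewrite mulr_ge0.
exact/measurable_funM/measurableT_comp.
Qed.

Let Ejoint_ge0 (h : Omega -> n.-tuple R -> R) :
  (forall w x, (0 <= h w x)%R) -> forall w, 0 <= \int[lam]_x (h w x * p x)%:E.
Proof. by move=> h0 w; apply: integral_ge0 => x _; rewrite lee_fin mulr_ge0. Qed.

Lemma Ejoint_le_affine_off_null_event :
  \int[lam]_x (G x * p x)%:E = EG%:E ->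
  Ejoint P lam p bad = 0 ->
  (forall w x, bad w x = 0 -> f w x <= A * g w x + B * G x)%R ->
  Ejoint P lam p f <= A%:E * Ejoint P lam p g + (B * EG)%:E.
Proof.
move=> EGE null fle; have EG0 : (0 <= EG)%R.
  by rewrite -lee_fin -EGE integral_ge0// => x _; rewrite lee_fin mulr_ge0.
have good := ae_eq0_of_integral_eq0 (mEjoint mbad bad0) (Ejoint_ge0 bad0) null.
have P1 : \int[P]_w cst 1 w = 1.
  by rewrite integral_cst// mul1e; exact: probability_setT.
rewrite /Ejoint -[(B * EG)%:E]mule1 -P1.
apply: ae_ge0_le_integral_affine; try exact: mEjoint; try exact: Ejoint_ge0.
- exact: A0.
- exact: mulr_ge0.
- exact: measurable_cst.
- by move=> w; rewrite lee_fin.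
apply: filterS good => w /(_ I) nullw _; rewrite /= mule1 EFinM -EGE.
apply: (integral_le_affine_off_null_event (bad := bad w)) => //.
- exact: (measurable_fun_pair2 w mf).
- exact: (measurable_fun_pair2 w mg).
- exact: (measurable_fun_pair2 w mbad).
- exact: fle.
Qed.

End Ejoint_le_off_event.

Section density_ratio.
Variables (R : realType) (n : nat) (p q : n.-tuple R -> R).
Hypotheses (p0 : forall x, 0 <= p x) (q0 : forall x, 0 <= q x).

Lemma dratio_ge0 x : 0 <= dratio p q x.
Proof. exact: divr_ge0. Qed.

Lemma measurable_dratio :
  measurable_fun setT p -> measurable_fun setT q -> measurable_fun setT (dratio p q).
Proof.
move=> mp mq; apply: measurable_funM => //.
exact: measurableT_comp (@measurable_inv R) mp.
Qed.

Lemma dratio_mulr : (forall x, 0 < q x -> 0 < p x) -> forall x, q x = dratio p q x * p x.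
Proof.
move=> supp x; have [px0|px0] := eqVneq (p x) 0; last by rewrite divfK.
rewrite px0 mulr0; apply/eqP; rewrite eq_le q0 andbT leNgt.
by apply/negP => /supp; rewrite px0 ltxx.
Qed.

End density_ratio.

Lemma Edens_add_lty (R : realType) n (lam : {measure set (n.-tuple R) -> \bar R})
    (p f g : n.-tuple R -> R) :
  measurable_fun setT p -> (forall x, 0 <= p x) ->
  measurable_fun setT f -> measurable_fun setT g ->
  (forall x, 0 <= f x) -> (forall x, 0 <= g x) ->
  (Edens lam p f < +oo)%E -> (Edens lam p g < +oo)%E ->
  (Edens lam p (fun x => (f x + g x)%R) < +oo)%E.
Proof.
move=> mp p0 mf mg f0 g0 fi gi; rewrite /Edens; under eq_integral do rewrite mulrDl.
by apply: ge0_integralD_lty => // [||x|x]; rewrite ?mulr_ge0//; exact: measurable_funM.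
Qed.

Section envelope.
Variables (R : realType) (d dtheta : nat) (lam : {measure set (d.-tuple R) -> \bar R}).
Variables (p q : d.-tuple R -> R) (theta0 : d.-tuple R -> dtheta.-tuple R) (vs : R).
Hypotheses (mp : measurable_fun setT p) (mq : measurable_fun setT q)
  (mtheta0 : measurable_fun setT theta0).
Hypothesis p0 : forall x, 0 <= p x.

Definition envelope x :=
  dratio p q x ^+ 2 + 1 + expR (vs * norminf x) + norminf (theta0 x) ^+ 8.

Lemma envelope_ge0 x : 0 <= envelope x.
Proof. by rewrite !addr_ge0 ?sqr_ge0 ?expR_ge0 ?exprn_ge0 ?norminf_ge0. Qed.

Let mr2 := measurable_funX 2 (measurable_dratio mp mq).
Let m1 : measurable_fun [set: d.-tuple R] (cst (1 : R)).
Proof. exact: measurable_cst. Qed.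
Let mexp : measurable_fun setT (fun x : d.-tuple R => expR (vs * norminf x)).
Proof.
apply/(measurableT_comp (@measurable_expR R))/measurable_funM => //.
exact: (measurable_norminf (f := id)).
Qed.
Let mtheta8 := measurable_funX 8 (measurable_norminf mtheta0).

Lemma measurable_envelope : measurable_fun setT envelope.
Proof. by do 3 apply: measurable_funD => //. Qed.

Lemma Edens_envelope_fin_num :
  (\int[lam]_x (p x)%:E = 1)%E ->
  (Edens lam p (fun x => (dratio p q x ^+ 2)%R) < +oo)%E ->
  (Edens lam p (fun x => expR (vs * norminf x)) < +oo)%E ->
  (Edens lam p (fun x => (norminf (theta0 x) ^+ 8)%R) < +oo)%E ->
  Edens lam p envelope \is a fin_num.
Proof.
move=> intp Er2 Eexp Etheta8.
have E1 : (Edens lam p (cst 1%R) < +oo)%E.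
  by rewrite /Edens; under eq_integral do rewrite mul1r; rewrite intp ltry.
have := Edens_add_lty mp p0 mr2 m1 (fun x => sqr_ge0 _) (fun=> ler01) Er2 E1.
move/(Edens_add_lty mp p0 (measurable_funD mr2 m1) mexp
  (fun x => addr_ge0 (sqr_ge0 _) ler01) (fun x => expR_ge0 _))/(_ Eexp).
move/(Edens_add_lty mp p0 (measurable_funD (measurable_funD mr2 m1) mexp) mtheta8
  (fun x => addr_ge0 (addr_ge0 (sqr_ge0 _) ler01) (expR_ge0 _))
  (fun x => exprn_ge0 _ (norminf_ge0 _)))/(_ Etheta8) => Elty.
rewrite ge0_fin_numE// integral_ge0// => x _.
by rewrite lee_fin mulr_ge0 ?envelope_ge0.
Qed.

End envelope.

Unset Implicit Arguments.

Theorem proposition4p3 (R : realType) (d dtheta : nat)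
  (lam : {measure set (d.-tuple R) -> \bar R})
  (Hlam : is_lebesgue_rV lam)
  (p q : d.-tuple R -> R)
  (Hp : is_density lam p) (Hq : is_density lam q)
  (Hsupp : forall x, 0 < q x -> 0 < p x)
  (theta0 : d.-tuple R -> dtheta.-tuple R)
  (Htheta0 : measurable_fun setT theta0)
  (d0 : measure_display) (Omega : measurableType d0) (P : probability Omega R)
  (thetahat : nat -> Omega -> d.-tuple R -> dtheta.-tuple R)
  (Hthetahat : forall N, measurable_fun setT
                 (fun z : Omega * d.-tuple R => thetahat N z.1 z.2))
  (xi : nat -> R)
  (Hi : forall N, (1 <= N)%N ->
     Ejoint P lam p
       (fun w x => if xi N < norminf (thetahat N w x) then 1 else 0) = 0%E)
  (Hii : (Edens lam p (fun x => (norminf (theta0 x) ^+ 8)%R) < +oo)%E)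
  (c m : R) (Hc : 0 < c) (Hm : 0 <= m)
  (Hiii : forall x, dratio p q x <= c * (norminf x `^ m + 1))
  (Hiv : (Edens lam p (fun x => (dratio p q x ^+ 2)%R) < +oo)%E)
  (Hv : exists vs : R, 0 < vs /\
     (Edens lam p (fun x => expR (vs * norminf x)%R) < +oo)%E) :
  exists c1 c2 : R, forall N : nat, (2 <= N)%N ->
    let err := fun w x => norm2sq (tsub (thetahat N w x) (theta0 x)) in
    Ejoint P lam q err = Ejoint P lam p (fun w x => (err w x * dratio p q x)%R) /\
    (Ejoint P lam p (fun w x => (err w x * dratio p q x)%R) <=
       (c1 * ln N%:R `^ m)%R%:E * Ejoint P lam p err +
       (c2 * dtheta%:R * (xi N ^+ 2 + 1) / N%:R)%R%:E)%E.
Proof.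
move: Hp Hq => [mp [p0 intp]] [mq [q0 _]]; have [vs [vs0 Hvs]] := Hv.
have mr := measurable_dratio mp mq.
pose G := envelope p q theta0 vs.
have EGE := fineK (Edens_envelope_fin_num mp mq Htheta0 p0 intp Hiv Hvs Hii).
set EG := fine _ in EGE.
exists (c * ((4 / vs) `^ m + (ln 2 `^ m)^-1)), (2 * EG) => N N2 err; split.
  apply: eq_integral => w _; apply: eq_integral => x _.
  by rewrite (dratio_mulr q0 Hsupp) mulrA.
have N2r : (2 : R) <= N%:R by rewrite ler_nat.
have merr : measurable_fun setT (fun z : Omega * d.-tuple R => err z.1 z.2).
  exact: measurable_norm2sq_tsub (Hthetahat N) (measurableT_comp Htheta0 measurable_snd).
have -> : (2 * EG * dtheta%:R * (xi N ^+ 2 + 1) / N%:R =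
    2 * dtheta%:R * (xi N ^+ 2 + 1) / N%:R * EG)%R by ring.
apply: (Ejoint_le_affine_off_null_event Hlam (G := G)
  (bad := fun w x => if xi N < norminf (thetahat N w x) then 1 else 0)) => //.
- by rewrite !mulr_ge0 ?(ltW Hc) ?addr_ge0 ?invr_ge0 ?powR_ge0.
- by apply: divr_ge0; rewrite ?mulr_ge0 ?addr_ge0 ?sqr_ge0 ?ler0n.
- exact: measurable_envelope.
- exact: measurable_funM merr (measurableT_comp mr measurable_snd).
- exact: measurable_norminf_gt_indicator (Hthetahat N).
- exact: envelope_ge0.
- by move=> w x; rewrite mulr_ge0 ?norm2sq_ge0 ?(dratio_ge0 p0 q0).
- by move=> w x; exact: norm2sq_ge0.
- by move=> w x; case: ifP.
- exact: Hi (ltnW N2).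
move=> w x; case: ltP => [_ /eqP|hxi _]; first by rewrite oner_eq0.
exact: err_mul_dratio_le Hc Hm vs0 N2r (dratio_ge0 p0 q0 x) (Hiii x) hxi.
Qed.
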